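(* Let $p$ be a prime and $n\ge1$. Suppose $V_m\to V$ in $\mathcal{Z}$. Then there is $m_0$ such that $V\subset V_m$ for all $m\ge m_0$.
   Context: $\mathcal{L}_{n,p}=\left(\bigoplus_{\mathbb{Z}}(\mathbb{Z}/p\mathbb{Z})^n\right)\rtimes\mathbb{Z}$ and $\mathcal{A}_{n,p}=\bigoplus_{\mathbb{Z}}(\mathbb{Z}/p\mathbb{Z})^n$. ${\rm Sub}(G)$ is the space of subgroups of $G$ with the topology induced from $\{0,1\}^G$, and $\mathcal{Z}={\rm Sub}(\mathcal{L}_{n,p})\setminus{\rm Sub}(\mathcal{A}_{n,p})$, the subgroups of $\mathcal{L}_{n,p}$ not contained in $\mathcal{A}_{n,p}$. *)

From mathcomp Require Import all_boot all_algebra.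
Set Implicit Arguments. Unset Strict Implicit. Unset Printing Implicit Defensive.
Import GRing.Theory.
Local Open Scope ring_scope.

(* Raw elements of L_{n,p} = (⊕_Z (Z/pZ)^n) ⋊ Z : a pair (a, k) where
   a : Z -> (F_p)^n (row vectors) and k : Z.  Genuine elements of L_{n,p}
   are those with a finitely supported. *)
Definition Lelt (p n : nat) : Type := ((int -> 'rV['F_p]_n) * int)%type.

Definition finsupp (p n : nat) (a : int -> 'rV['F_p]_n) : Prop :=
  exists N : nat, forall i : int, (N < absz i)%N -> a i = 0.

Definition inL (p n : nat) (x : Lelt p n) : Prop := finsupp x.1.

(* The generator of Z acts by the shift (t.a)(i) = a(i-1):
   (a,k)(b,l) = (a + t^k b, k + l). *)
Definition Lmul (p n : nat) (x y : Lelt p n) : Lelt p n :=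
  (fun i => x.1 i + y.1 (i - x.2), x.2 + y.2).
Definition Lone (p n : nat) : Lelt p n := (fun _ => 0, 0).
Definition Linv (p n : nat) (x : Lelt p n) : Lelt p n :=
  (fun i => - x.1 (i + x.2), - x.2).

Definition is_subgroup (p n : nat) (H : Lelt p n -> Prop) : Prop :=
  [/\ (forall x, H x -> inL x),
      H (Lone p n),
      (forall x y, H x -> H y -> H (Lmul x y)) &
      (forall x, H x -> H (Linv x))].

Definition inA (p n : nat) (x : Lelt p n) : Prop := x.2 = 0.

Definition inZ (p n : nat) (H : Lelt p n -> Prop) : Prop :=
  is_subgroup H /\ ~ (forall x, H x -> inA x).

(* Convergence in Sub(L) with the topology induced from the product
   topology on {0,1}^L: for every g in L, eventually (g ∈ V_m <-> g ∈ V). *)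
Definition sub_converges (p n : nat) (Vs : nat -> Lelt p n -> Prop)
    (V : Lelt p n -> Prop) : Prop :=
  forall x : Lelt p n, inL x ->
    exists m0 : nat, forall m : nat, (m0 <= m)%N -> (Vs m x <-> V x).

From mathcomp Require Import all_boot all_algebra.
From mathcomp Require Import zify ring.
From Stdlib Require Import Classical FunctionalExtensionality.
Set Implicit Arguments. Unset Strict Implicit. Unset Printing Implicit Defensive.
Import GRing.Theory Num.Theory.
Local Open Scope ring_scope.

(* Let k > 0 be the least positive degree of an element of V, realised by g.
   Multiplying by powers of g brings every element of V into V ∩ A, and
   conjugating by g translates elements of V ∩ A by k.  For each of the finitely
   many pairs (r, v) with 0 <= r < k and v in F_p^n, if some element of V ∩ A
   has top coefficient v at r, then one does with support in a window
   [r - C, r] for a single C.  Subtracting such elements (translated by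
   multiples of k) lowers the top of the support, so V is generated by g and
   the finitely many elements of V ∩ A supported in [-C, k].  By convergence,
   all of these lie in V_m for m large, hence so does V. *)

Lemma eventually_forall_finType (T : finType) (P : T -> nat -> Prop) :
  (forall t, exists m0, forall m, (m0 <= m)%N -> P t m) ->
  exists m0, forall t m, (m0 <= m)%N -> P t m.
Proof.
move=> evP.
suff: forall s : seq T, exists m0, forall t m, t \in s -> (m0 <= m)%N -> P t m.
  by case/(_ (enum T)) => m0 hm0; exists m0 => t m; apply: hm0; rewrite mem_enum.
elim=> [|t s [m0 hm0]]; first by exists 0%N.
have [m1 hm1] := evP t.
exists (maxn m1 m0) => t' m; rewrite inE geq_max => /orP[/eqP-> | t's] /andP[le1 le0].
  exact: hm1.
exact: hm0.
Qed.

Lemma ex_least_nat (P : nat -> Prop) :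
  (exists n, P n) -> exists n, P n /\ forall m, P m -> (n <= m)%N.
Proof.
move=> [n Pn]; apply: NNPP => nomin.
have below : forall k m, (m < k)%N -> ~ P m.
  elim=> [//|k IH] m; rewrite ltnS leq_eqVlt => /orP[/eqP-> Pk | /IH//].
  apply: nomin; exists k; split=> // m' Pm'.
  by rewrite leqNgt; apply/negP => /IH.
exact: below Pn.
Qed.

Section SubgroupClosure.
Variables (p n : nat).
Local Notation R := 'rV['F_p]_n.
Local Notation E := (Lelt p n).

Definition shift (z : int) (w : int -> R) : int -> R := fun i => w (i - z).

Definition supported_in (w : int -> R) (a b : int) : Prop :=
  forall i, i < a \/ b < i -> w i = 0.

Lemma Lelt_eq (x y : E) : (forall i, x.1 i = y.1 i) -> x.2 = y.2 -> x = y.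
Proof. by case: x y => [x1 x2] [y1 y2] /= /functional_extensionality -> ->. Qed.

Lemma shiftD a b w : shift a (shift b w) = shift (a + b) w.
Proof. by apply: functional_extensionality => i; rewrite /shift opprD addrA. Qed.

Lemma shift0 w : shift 0 w = w.
Proof. by apply: functional_extensionality => i; rewrite /shift subr0. Qed.

Lemma supported_in_widen w a b a' b' :
  a' <= a -> b <= b' -> supported_in w a b -> supported_in w a' b'.
Proof. by move=> ha hb sw i hi; apply: sw; lia. Qed.

Variable H : E -> Prop.
Hypothesis subH : is_subgroup H.

Lemma subgroupM x y : H x -> H y -> H (Lmul x y).
Proof. by move: subH => [] _ _ + _; apply. Qed.

Lemma subgroupV x : H x -> H (Linv x).
Proof. by move: subH => [] _ _ _; apply. Qed.

Lemma subgroupA0 w : (forall i, w i = 0) -> H (w, 0).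
Proof.
move=> w0; have -> : (w, 0) = Lone p n by apply: Lelt_eq.
by move: subH => [].
Qed.

Lemma subgroupAD w u : H (w, 0) -> H (u, 0) -> H (fun i => w i + u i, 0).
Proof.
move=> Hw Hu; have -> : (fun i => w i + u i, 0) = Lmul (w, 0) (u, 0).
  by apply: Lelt_eq => [i|] /=; rewrite ?subr0 ?addr0.
exact: subgroupM.
Qed.

Lemma subgroupAB w u : H (w, 0) -> H (u, 0) -> H (fun i => w i - u i, 0).
Proof.
move=> Hw Hu; have -> : (fun i => w i - u i, 0) = Lmul (w, 0) (Linv (u, 0)).
  by apply: Lelt_eq => [i|] /=; rewrite ?addr0 ?oppr0.
by apply: subgroupM => //; apply: subgroupV.
Qed.

(* Conjugation by g translates elements of A by g.2. *)
Lemma subgroup_shift g w :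
  H g -> H (w, 0) -> H (shift g.2 w, 0) /\ H (shift (- g.2) w, 0).
Proof.
move=> Hg Hw; split.
- have -> : (shift g.2 w, 0) = Lmul (Lmul g (w, 0)) (Linv g).
    apply: Lelt_eq => [i|] /=; last by rewrite addr0 subrr.
    by rewrite /shift addr0 subrK addrAC subrr add0r.
  by apply: subgroupM; [apply: subgroupM | apply: subgroupV].
- have -> : (shift (- g.2) w, 0) = Lmul (Lmul (Linv g) (w, 0)) g.
    apply: Lelt_eq => [i|] /=; last by rewrite addr0 addNr.
    by rewrite /shift addr0 opprK addrAC addNr add0r.
  by apply: subgroupM => //; apply: subgroupM => //; apply: subgroupV.
Qed.

Lemma subgroup_shiftZ g w (z : int) :
  H g -> H (w, 0) -> H (shift (z * g.2) w, 0).
Proof.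
move=> Hg.
have shiftN : forall (m : nat) w, H (w, 0) ->
    H (shift (m%:Z * g.2) w, 0) /\ H (shift (- (m%:Z * g.2)) w, 0).
  elim=> [|m IH] w' Hw'; first by rewrite mul0r oppr0 shift0.
  have [H1 H2] := IH _ Hw'.
  have -> : m.+1%:Z * g.2 = g.2 + m%:Z * g.2 by ring.
  by rewrite opprD -!shiftD; split; [case: (subgroup_shift Hg H1) | case: (subgroup_shift Hg H2)].
move=> Hw; case: z => m; first exact: (shiftN m w Hw).1.
by rewrite NegzE mulNr; exact: (shiftN m.+1 w Hw).2.
Qed.

End SubgroupClosure.

Section TopCoefficients.
Variables (p n : nat) (V : Lelt p n -> Prop).
Local Notation R := 'rV['F_p]_n.

Definition top_at (j : int) (c : nat) (v : R) : Prop :=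
  exists w, V (w, 0) /\ supported_in w (j - c%:Z) j /\ w j = v.

Lemma top_at_mono j c c' v : (c <= c')%N -> top_at j c v -> top_at j c' v.
Proof.
move=> le [w [Vw [sw wj]]]; exists w; split=> //; split=> //.
by apply: supported_in_widen sw => //; lia.
Qed.

Lemma top_at_shift g j c v (z : int) :
  is_subgroup V -> V g -> top_at j c v -> top_at (j + z * g.2) c v.
Proof.
move=> subV Vg [w [Vw [sw wj]]]; exists (shift (z * g.2) w); split.
  exact: subgroup_shiftZ.
by split; [move=> i hi; apply: sw; lia | rewrite /shift addrK].
Qed.

(* Finiteness of [0, k) x F_p^n gives one window length serving all pairs. *)
Lemma top_at_uniform (k : nat) :
  exists C : nat, forall (r : int) v c, 0 <= r < k%:Z -> top_at r c v -> top_at r C v.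
Proof.
pose P (t : 'I_k * R) C := forall c, top_at t.1 c t.2 -> top_at t.1 C t.2.
have evP : forall t, exists m0, forall m, (m0 <= m)%N -> P t m.
  move=> [r v]; case: (classic (exists c, top_at r c v)) => [[c hc] | none].
    by exists c => m le c' _; exact: top_at_mono le hc.
  by exists 0%N => m _ c' hc'; case: none; exists c'.
have [C hC] := eventually_forall_finType evP.
exists C => r v c hr.
have rk : (absz r < k)%N by lia.
have -> : r = (Ordinal rk)%:Z by rewrite /=; lia.
exact: (hC (Ordinal rk, v) C (leqnn C)).
Qed.

End TopCoefficients.

Section Reduction.
Variables (p n : nat) (V H : Lelt p n -> Prop) (g : Lelt p n) (k C : nat).
Hypotheses (subV : is_subgroup V) (subH : is_subgroup H).
Hypotheses (Vg : V g) (Hg : H g) (gk : g.2 = k%:Z) (k_gt0 : (0 < k)%N).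
Hypothesis top_uniform :
  forall r v c, 0 <= r < k%:Z -> top_at V r c v -> top_at V r C v.
Hypothesis H_window :
  forall u, V (u, 0) -> supported_in u (- C%:Z) k%:Z -> H (u, 0).

(* Translating by a multiple of k moves the top index b of the support into
   [0, k).  A short support then fits into the window; otherwise subtracting a
   translated window element with the same top coefficient shortens it. *)
Lemma subgroup_A_part w a b : V (w, 0) -> supported_in w a b -> H (w, 0).
Proof.
move: {2}(absz (b - a)).+1 (ltnSn (absz (b - a))) => N.
elim: N w a b => [//|N IH] w a b ltN Vw sw.
have [ba | ab] := ltrP b a; first by apply: subgroupA0 => // i; apply: sw; lia.
pose q := (b %/ k%:Z)%Z; pose r := (b %% k%:Z)%Z.
have b_qr : b = r + q * g.2 by rewrite gk addrC; exact: divz_eq.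
have r_range : 0 <= r < k%:Z by rewrite modz_ge0 ?ltz_pmod //; lia.
have [short | long] := leqP (absz (b - a)) C.
  have Hw' : H (shift (- q * g.2) w, 0).
    apply: H_window; first exact: subgroup_shiftZ.
    by move=> i hi; rewrite /shift mulNr opprK; apply: sw; lia.
  have := subgroup_shiftZ subH q Hg Hw'.
  by rewrite shiftD -mulrDl addrN mul0r shift0.
have top_b : top_at V b (absz (b - a)) (w b).
  by exists w; split=> //; split=> //; apply: supported_in_widen sw => //; lia.
have top_r : top_at V r (absz (b - a)) (w b).
  by have := top_at_shift (- q) subV Vg top_b; rewrite b_qr mulNr addrK.
have [u [Vu [su ur]]] := top_uniform r_range top_r.
have Hu : H (u, 0) by apply: H_window => //; apply: supported_in_widen su => //; lia.
pose u' := shift (q * g.2) u.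
have Vu' : V (u', 0) by exact: subgroup_shiftZ.
have Hu' : H (u', 0) by exact: subgroup_shiftZ.
have u'b : u' b = w b by rewrite /u' /shift {1}b_qr addrK ur.
have sd : supported_in (fun i => w i - u' i) a (b - 1).
  move=> i hi; have [->|ib] := eqVneq i b; first by rewrite u'b subrr.
  rewrite sw; last by lia.
  by rewrite /u' /shift su ?subrr //; lia.
have Hd : H (fun i => w i - u' i, 0).
  by apply: IH sd; [lia | exact: subgroupAB].
have -> : w = (fun i => (w i - u' i) + u' i).
  by apply: functional_extensionality => i; rewrite subrK.
exact: subgroupAD.
Qed.

Hypothesis k_least : forall x, V x -> 0 < x.2 -> k%:Z <= x.2.

Lemma subgroup_of_window x : V x -> H x.
Proof.
move: {2}(absz x.2).+1 (ltnSn (absz x.2)) => N.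
elim: N x => [//|N IH] x ltN Vx.
have [x0 | xn0] := eqVneq x.2 0.
  case: subV => /(_ x Vx) [M sM] _ _ _.
  case: x Vx sM x0 {ltN} => w z Vw sM /= z0; subst z.
  by apply: (subgroup_A_part (a := - M%:Z) (b := M%:Z) Vw) => i hi; apply: sM; lia.
have [kx | xk] := lerP k%:Z x.2.
  have -> : x = Lmul (Lmul x (Linv g)) g.
    apply: Lelt_eq => [i|] /=; last by rewrite subrK.
    by rewrite opprD opprK addrA subrK.
  apply: subgroupM => //; apply: IH; first by rewrite /= gk; lia.
  by apply: subgroupM => //; apply: subgroupV.
have [xk' | kx'] := lerP x.2 (- k%:Z).
  have -> : x = Lmul (Lmul x g) (Linv g).
    apply: Lelt_eq => [i|] /=; last by rewrite addrK.
    by rewrite opprD addrA subrK addrK.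
  apply: subgroupM => //; last exact: subgroupV.
  by apply: IH; [rewrite /= gk; lia | exact: subgroupM].
have [x_pos | x_neg] := ltrP 0 x.2; first by have := k_least Vx x_pos; lia.
by have := k_least (subgroupV subV Vx); rewrite /=; lia.
Qed.

End Reduction.

Lemma least_positive_degree (p n : nat) (V : Lelt p n -> Prop) :
  inZ V -> exists (g : Lelt p n) (k : nat),
    [/\ V g, g.2 = k%:Z, (0 < k)%N & forall x, V x -> 0 < x.2 -> k%:Z <= x.2].
Proof.
move=> [subV notA].
have [g0 [Vg0 g0n0]] : exists g, V g /\ g.2 <> 0.
  by apply: NNPP => none; apply: notA => x Vx; apply: NNPP => x0; apply: none; exists x.
pose P k := (0 < k)%N /\ exists x, V x /\ x.2 = k%:Z.
have P_g0 : P (absz g0.2).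
  split; first lia.
  have [g0_ge0 | g0_lt0] := lerP 0 g0.2; first by exists g0; split=> //; lia.
  by exists (Linv g0); split; [exact: subgroupV | rewrite /=; lia].
have [k [[k_gt0 [g [Vg gk]]] k_least]] := ex_least_nat (ex_intro _ _ P_g0).
exists g, k; split=> // x Vx x_pos.
suff : (k <= absz x.2)%N by lia.
by apply: k_least; split; [lia | exists x; split=> //; lia].
Qed.

Lemma subgroup_determined_by_window (p n : nat) (V : Lelt p n -> Prop) :
  inZ V -> exists (g : Lelt p n) (a b : int), V g /\
    forall H, is_subgroup H -> H g ->
      (forall w, V (w, 0) -> supported_in w a b -> H (w, 0)) ->
      forall x, V x -> H x.
Proof.
move=> ZV; have [g [k [Vg gk k_gt0 k_least]]] := least_positive_degree ZV.
have [C top_uniform] := top_at_uniform V k.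
exists g, (- C%:Z), k%:Z; split=> // H subH Hg H_window.
exact: (subgroup_of_window ZV.1 subH Vg Hg gk k_gt0 top_uniform H_window k_least).
Qed.

(* Finitely many w are supported in [a, b]; they are coded by their values there. *)
Lemma window_eventually (p n : nat) (Vs : nat -> Lelt p n -> Prop) V (a b : int) :
  sub_converges Vs V -> exists m0, forall m, (m0 <= m)%N ->
    forall w, V (w, 0) -> supported_in w a b -> Vs m (w, 0).
Proof.
move=> conv.
pose N := (absz (b - a)).+1.
pose decode (f : {ffun 'I_N -> 'rV['F_p]_n}) : int -> 'rV['F_p]_n :=
  fun i => if (a <= i) && (i <= b) then f (inord (absz (i - a))) else 0.
have evP : forall f, exists m0, forall m, (m0 <= m)%N ->
    V (decode f, 0) -> Vs m (decode f, 0).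
  move=> f; have fin_f : inL (decode f, 0).
    exists (absz a + absz b)%N => i hi; rewrite /decode /=.
    by case: ifP => // /andP[] *; lia.
  by have [m0 hm0] := conv _ fin_f; exists m0 => m le; apply: (hm0 m le).2.
have [m0 hm0] := eventually_forall_finType evP.
exists m0 => m le w Vw sw.
have w_code : w = decode [ffun j : 'I_N => w (a + j%:Z)].
  apply: functional_extensionality => i; rewrite /decode.
  case: ifP => [/andP[ai ib] | /negbT]; last by rewrite negb_and => hi; apply: sw; lia.
  by rewrite ffunE inordK; [congr w; lia | lia].
by rewrite w_code in Vw *; apply: hm0.
Qed.

Theorem lemma6p13 (p n : nat) (Vs : nat -> Lelt p n -> Prop)
    (V : Lelt p n -> Prop) :
  prime p -> (1 <= n)%N ->
  (forall m, inZ (Vs m)) -> inZ V -> sub_converges Vs V ->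
  exists m0 : nat, forall m : nat, (m0 <= m)%N ->
    forall x : Lelt p n, V x -> Vs m x.
Proof.
move=> _ _ ZVs ZV conv.
have [[inL_V _ _ _] _] := ZV.
have [g [a [b [Vg V_generated]]]] := subgroup_determined_by_window ZV.
have [m_win win] := window_eventually a b conv.
have [m_g g_conv] := conv g (inL_V g Vg).
exists (maxn m_win m_g) => m; rewrite geq_max => /andP[le_win le_g].
apply: V_generated; first exact: (ZVs m).1.
  exact: (g_conv m le_g).2.
exact: win.
Qed.
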